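(* The finite element scheme ''Find $u_h\in V_h$ such that $\int_a^b \mathcal{D}\, u_h^\prime v_h^\prime\,\mathrm{d}x =\int_a^b f v_h\,\mathrm{d}x$ for all $v_h\in V_h$'', in the limit $\beta\to 0$ (i.e. for $\beta=0$), is equivalent to the Babuška-Zlámal DG method: Find $u_h\in V_h^D$ such that \begin{equation} \sum_{i=0}^{N}\int_{I_i} u_h^\prime v_h^\prime\,\mathrm{d}x + D\sum_{i=0}^{N+1}[u_h]_{x_i}[v_h]_{x_i}= \int_a^b fv_h\,\mathrm{d}x,\quad \forall v_h\in V_h^D. \end{equation}
   Context: Consider the 1D Poisson problem $-u''=f$ on $(a,b)$ with zero Dirichlet boundary conditions. Take mesh nodes $a=x_0<x_1<\ldots<x_{N+1}=b$ and the discontinuous piecewise linear space $V_h^D=\{v\in L^2([a,b]): v|_{I_i}\in\mathbb{P}_1(I_i),\ i=0,\ldots,N\}$ with $I_i=[x_i,x_{i+1}]$. For $v_h\in V_h^D$ the jump at an interior node is $[v_h]_{x_i}=v_h(x_i^+)-v_h(x_i^-)$, and at the endpoints $[v_h]_{x_0}=v_h(x_0^+)$, $[v_h]_{x_{N+1}}=-v_h(x_{N+1}^-)$. The mesh is enriched with auxiliary nodes $y_i$: $a=y_0<x_0<y_1<x_1<\ldots<y_{N+1}<x_{N+1}=b$, giving intervals $I_i=[x_i,y_{i+1}]$ and small intervals $J_i=[y_i,x_i]$ of length $|J_i|=\beta$ for all $i=0,\dots,N+1$. $V_h$ is the space of continuous piecewise linear functions on this enriched mesh (linear on each $I_i$ and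 each $J_i$) vanishing at $a$ and $b$. The modified diffusion coefficient is $\mathcal{D}(x)=1$ on the $I_i$ and $\mathcal{D}(x)=\beta D$ on the $J_i$, with a constant $D>0$. As $\beta\to 0$ (each $J_i$ collapses to the point $x_i$), values are identified via $u_h(y_i)=u_h(x_i^-)$, $u_h(x_i)=u_h(x_i^+)$, so that every $v_h\in V_h$ is identified with a limiting $v_h\in V_h^D$, and $v_h(x_i)-v_h(y_i)\to[v_h]_{x_i}$. *)

From HB Require Import structures.
From mathcomp Require Import all_boot all_order all_algebra.
From mathcomp Require Import all_classical all_reals all_analysis.
Set Implicit Arguments. Unset Strict Implicit. Unset Printing Implicit Defensive.
Import Order.TTheory GRing.Theory Num.Theory.
Import numFieldNormedType.Exports.
Local Open Scope classical_set_scope.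
Local Open Scope ring_scope.

Section Defs.
Variable R : realType.

Definition lin (p q l r t : R) : R := l + (r - l) * (t - p) / (q - p).

(* piecewise linear function on the mesh p 0 < p 1 < ... < p M, where on the
   k-th cell [p k, p k.+1) it is the affine function with endpoint values
   l k (at p k^+) and r k (at p k.+1^-).  (Values at the single points
   p M and outside [p 0, p M] are 0; irrelevant for integrals.) *)
Definition pw_lin (p : nat -> R) (M : nat) (l r : nat -> R) (t : R) : R :=
  \sum_(k < M) (if (p k <= t < p k.+1) then lin (p k) (p k.+1) (l k) (r k) t else 0).

Definition pw_slope (p : nat -> R) (M : nat) (l r : nat -> R) (t : R) : R :=
  \sum_(k < M) (if (p k <= t < p k.+1) then (r k - l k) / (p k.+1 - p k) else 0).

(* ---------- The DG space V_h^D on the original mesh x 0 < ... < x N.+1 ----------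
   An element v_h of V_h^D is given by L i = v_h(x_i^+) and Rt i = v_h(x_{i+1}^-),
   i = 0..N (its values at the two ends of I_i = [x_i, x_{i+1}]). *)
Definition dg_fun (x : nat -> R) (N : nat) (L Rt : nat -> R) : R -> R :=
  pw_lin x N.+1 L Rt.
Definition dg_deriv (x : nat -> R) (N : nat) (L Rt : nat -> R) : R -> R :=
  pw_slope x N.+1 L Rt.

Definition jump (N : nat) (L Rt : nat -> R) (i : nat) : R :=
  if i == 0%N then L 0%N
  else if i == N.+1 then - Rt N
  else L i - Rt i.-1.

Definition dg_a (x : nat -> R) (N : nat) (D : R) (uL uR vL vR : nat -> R) : R :=
  \sum_(i < N.+1)
     (\int[lebesgue_measure]_(t in `[x i, x i.+1]) (dg_deriv x N uL uR t * dg_deriv x N vL vR t))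
  + D * \sum_(i < N.+2) (jump N uL uR i * jump N vL vR i).

Definition dg_l (x : nat -> R) (N : nat) (f : R -> R) (vL vR : nat -> R) : R :=
  \int[lebesgue_measure]_(t in `[x 0%N, x N.+1]) (f t * dg_fun x N vL vR t).

Definition dg_solution (x : nat -> R) (N : nat) (D : R) (f : R -> R) (uL uR : nat -> R) : Prop :=
  forall vL vR : nat -> R, dg_a x N D uL uR vL vR = dg_l x N f vL vR.

(* ---------- The enriched mesh, for parameter beta > 0 ----------
   a = y_0 < x_0 < y_1 < x_1 < ... < y_{N+1} < x_{N+1} = b, |J_i| = x_i - y_i = beta.
   Convention: the node x_0 is moved to a + beta, the nodes x_i (i >= 1) are kept,
   and y_i := x_i - beta (so y_0 = a).  *)
Definition xb (x : nat -> R) (beta : R) (i : nat) : R :=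
  if i == 0%N then x 0%N + beta else x i.
Definition yb (x : nat -> R) (beta : R) (i : nat) : R := xb x beta i - beta.

(* enriched nodes z 0 = y_0, z 1 = x_0, z 2 = y_1, ..., z (2i) = y_i, z (2i+1) = x_i *)
Definition zb (x : nat -> R) (beta : R) (k : nat) : R :=
  if odd k then xb x beta k./2 else yb x beta k./2.

(* Nodal values on the enriched mesh of the element of V_h identified with the
   DG dofs (L, Rt):  v(y_0) = v(a) = 0, v(x_i) = L i = v(x_i^+),
   v(y_{i+1}) = Rt i = v(x_{i+1}^-), v(x_{N+1}) = v(b) = 0. *)
Definition wval (N : nat) (L Rt : nat -> R) (k : nat) : R :=
  if (k == 0%N) || (k == (N.*2).+3) then 0
  else if odd k then L k./2 else Rt (k./2).-1.

Definition fe_fun (x : nat -> R) (N : nat) (beta : R) (L Rt : nat -> R) : R -> R :=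
  pw_lin (zb x beta) (N.*2).+3 (wval N L Rt) (fun k => wval N L Rt k.+1).
Definition fe_deriv (x : nat -> R) (N : nat) (beta : R) (L Rt : nat -> R) : R -> R :=
  pw_slope (zb x beta) (N.*2).+3 (wval N L Rt) (fun k => wval N L Rt k.+1).

Definition coefD (x : nat -> R) (N : nat) (D beta : R) (t : R) : R :=
  if `[< exists i : 'I_N.+2, yb x beta i <= t < xb x beta i >] then beta * D else 1.

Definition fe_a (x : nat -> R) (N : nat) (D : R) (beta : R) (uL uR vL vR : nat -> R) : R :=
  \int[lebesgue_measure]_(t in `[x 0%N, x N.+1])
     (coefD x N D beta t * fe_deriv x N beta uL uR t * fe_deriv x N beta vL vR t).

Definition fe_l (x : nat -> R) (N : nat) (f : R -> R) (beta : R) (vL vR : nat -> R) : R :=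
  \int[lebesgue_measure]_(t in `[x 0%N, x N.+1]) (f t * fe_fun x N beta vL vR t).

End Defs.

(** For [beta > 0] the finite element form is computed cell by cell on the
    enriched mesh.  On a small interval [J_i] the coefficient is [beta D], the
    length [beta] and the slope [[v]_{x_i} / beta], so [J_i] contributes exactly
    [D [u]_{x_i} [v]_{x_i}], whatever [beta]; on [I_i] only the length depends on
    [beta].  Hence the FE form converges to the DG form as [beta -> 0].  The FE
    functions are bounded uniformly in [beta] and converge to the DG function
    off the nodes, so the right-hand sides converge by dominated convergence.
    Uniqueness of limits then identifies the limiting FE scheme with the
    Babuska-Zlamal method. *)

From Pilot Require Import Defs.
From HB Require Import structures.
From mathcomp Require Import all_boot all_order all_algebra.
From mathcomp Require Import all_classical all_reals all_analysis.
From mathcomp Require Import zify ring lra.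
Import Order.TTheory GRing.Theory Num.Theory.
Import numFieldNormedType.Exports.
Local Open Scope classical_set_scope.
Local Open Scope ring_scope.

Set Implicit Arguments. Unset Strict Implicit. Unset Printing Implicit Defensive.

Section PiecewiseOnMesh.
Variable R : realType.
Notation mu := (@lebesgue_measure R).
Implicit Types (p : nat -> R) (M : nat).

Definition incr_mesh p M := forall k, (k < M)%N -> p k < p k.+1.

Lemma incr_mesh_le p M a b : incr_mesh p M -> (a <= b)%N -> (b <= M)%N -> p a <= p b.
Proof.
move=> hp; elim: b => [|b IH]; first by rewrite leqn0 => /eqP ->.
rewrite leq_eqVlt => /orP[/eqP -> //|ab] bM.
by apply: le_trans (IH ab (ltnW bM)) _; exact/ltW/hp.
Qed.

Lemma sum_on_cell p M (F : nat -> R) j t : incr_mesh p M -> (j < M)%N ->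
  p j <= t < p j.+1 ->
  \sum_(k < M) (if p k <= t < p k.+1 then F k else 0) = F j.
Proof.
move=> hp jM /andP[pjt tpj].
rewrite (bigD1 (Ordinal jM)) //= pjt tpj big1 ?addr0 // => k /eqP kj.
have [kj'|jk] := ltnP k j.
  have pkj : p k.+1 <= p j by apply: incr_mesh_le hp _ _; lia.
  by rewrite (ltNge t) (le_trans pkj pjt) andbF.
have pjk : p j.+1 <= p k.
  apply: incr_mesh_le hp _ (ltnW (ltn_ord k)); rewrite ltn_neqAle jk andbT.
  by apply/eqP => e; apply: kj; apply: val_inj.
by rewrite (leNgt (p k)) (lt_le_trans tpj pjk).
Qed.

Lemma exists_cell p M t : incr_mesh p M -> p 0%N <= t < p M ->
  exists2 j, (j < M)%N & p j <= t < p j.+1.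
Proof.
elim: M => [|M IH] hp /andP[p0t tpM]; first by move: (le_lt_trans p0t tpM); rewrite ltxx.
have [tM|Mt] := ltP t (p M); last by exists M => //; rewrite Mt.
have [|j jM hj] := IH (fun k kM => hp k (ltnW kM)); first by rewrite p0t tM.
by exists j => //; exact: ltnW.
Qed.

Lemma measurable_cellwise_const p M (c : nat -> R) :
  measurable_fun setT (fun t => \sum_(k < M) (if p k <= t < p k.+1 then c k else 0)).
Proof.
apply: measurable_sum => k; apply: measurable_fun_ifT => //.
apply: measurable_and; first exact: measurable_realfun.measurable_fun_ler.
exact: measurable_realfun.measurable_fun_ltr.
Qed.

Lemma integrable_cellwise_const p M g (c : nat -> R) : incr_mesh p M ->
  (forall k t, (k < M)%N -> p k <= t < p k.+1 -> g t = c k) ->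
  mu.-integrable `[p 0%N, p M] (EFin \o g).
Proof.
move=> hp hg; apply: measurable_bounded_integrable => //.
- have := lebesgue_measure_itv `[p 0%N, p M]; rewrite /= => ->.
  by case: ifP => _ //; exact: ltry.
- apply/measurable_realfun.measurable_fun_itv_bndo_bndcP.
  apply: (@eq_measurable_fun _ _ _ _ _
    (fun t => \sum_(k < M) (if p k <= t < p k.+1 then c k else 0))).
    move=> t; rewrite inE /= in_itv /= => ht.
    have [j jM hj] := exists_cell hp ht.
    by rewrite (sum_on_cell _ hp jM hj) (hg _ _ jM hj).
  exact: measurable_funS (measurable_cellwise_const p M c).
- exists (\sum_(k < M) `|c k| + `|g (p M)|); split; first exact: num_real.
  move=> r Br t; rewrite /= in_itv /= => /andP[p0t tpM].
  apply/ltW/le_lt_trans/Br.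
  have [tM|Mt] := ltP t (p M); last first.
    have -> : t = p M by apply/eqP; rewrite eq_le tpM Mt.
    by rewrite lerDr sumr_ge0.
  have [j jM hj] := exists_cell hp (introT andP (conj p0t tM)).
  rewrite (hg _ _ jM hj) (bigD1 (Ordinal jM)) //= -addrA lerDl.
  by rewrite addr_ge0 ?sumr_ge0.
Qed.

Lemma Rintegral_cellwise_const p M g (c : nat -> R) : incr_mesh p M ->
  (forall k t, (k < M)%N -> p k <= t < p k.+1 -> g t = c k) ->
  \int[mu]_(t in `[p 0%N, p M]) g t = \sum_(k < M) c k * (p k.+1 - p k).
Proof.
elim: M => [|M IH] hp hg; first by rewrite big_ord0 set_itv1 Rintegral_set1.
have hpM : incr_mesh p M by move=> k kM; apply/hp/ltnW.
have ig := integrable_cellwise_const hp hg.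
have pMM : p M < p M.+1 by apply: hp.
have p0M : p 0%N <= p M by apply: incr_mesh_le hpM _ _.
have last_cell : \int[mu]_(t in `]p M, p M.+1]) g t = c M * (p M.+1 - p M).
  rewrite -Rintegral_itv_bndo_bndc; last first.
    by apply: integrableS ig => //; apply: subset_itvScc; rewrite bnd_simp.
  rewrite (@eq_Rintegral _ _ _ _ _ (cst (c M))); last first.
    move=> t; rewrite inE /= in_itv /= => /andP[pMt tpM].
    by apply: hg; rewrite // tpM ltW.
  rewrite Rintegral_cst //.
  by have := lebesgue_measure_itv `]p M, p M.+1[; rewrite /= => ->; rewrite lte_fin pMM.
have := Rintegral_itvB (x := p M) ig; rewrite !bnd_simp last_cell => /(_ p0M (ltW pMM)).
rewrite big_ord_recr /= -(IH hpM); first lra.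
by move=> k t kM; apply/hg/ltnW.
Qed.

Lemma Rintegral_itv_const (a b c : R) g : a < b ->
  (forall t, a <= t < b -> g t = c) -> \int[mu]_(t in `[a, b]) g t = c * (b - a).
Proof.
move=> ab hg; pose p k := if k == 0%N then a else b.
have := @Rintegral_cellwise_const p 1 g (fun=> c); rewrite big_ord1; apply.
  by move=> k; rewrite ltnS leqn0 => /eqP ->.
by move=> k t; rewrite ltnS leqn0 => /eqP -> /=; exact: hg.
Qed.

Lemma sum_split_parity (F : nat -> R) n :
  \sum_(k < n.*2.+1) F k = \sum_(i < n.+1) F i.*2 + \sum_(i < n) F i.*2.+1.
Proof.
elim: n => [|n IH]; first by rewrite !big_ord1 big_ord0 addr0.
rewrite doubleS (big_ord_recr n.*2.+2) (big_ord_recr n.*2.+1) /= IH.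
by rewrite (big_ord_recr n.+1) (big_ord_recr n (fun i => F i.*2.+1)) /= -doubleS; lra.
Qed.

Lemma nat_double_cases k : exists i, k = i.*2 \/ k = i.*2.+1.
Proof. by exists k./2; rewrite -{1 3}(odd_double_half k); case: (odd k); [right|left]. Qed.

End PiecewiseOnMesh.

Section DominatedLimit.
Variable R : realType.
Notation mu := (@lebesgue_measure R).

Lemma Rintegral_itv_cc_oo (a c : R) (h : R -> R) : measurable_fun `[a, c] h ->
  \int[mu]_(t in `[a, c]) h t = \int[mu]_(t in `]a, c[) h t.
Proof.
move=> mh; rewrite /Rintegral; congr fine.
rewrite -integral_itv_bndo_bndc -?integral_itv_obnd_cbnd //.
  apply/measurable_realfun.measurable_EFinP; apply: measurable_funS mh => //.
  exact: subset_itv_oo_cc.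
apply/measurable_realfun.measurable_EFinP; apply: measurable_funS mh => //.
exact: subset_itv_co_cc.
Qed.

Lemma Rintegral_mul_bounded_cvg (a c C C0 : R) (f g0 : R -> R) (g : R -> R -> R) :
  mu.-integrable `[a, c] (EFin \o f) ->
  (forall b, measurable_fun setT (g b)) -> measurable_fun setT g0 ->
  (forall b t, `|g b t| <= C) -> (forall t, `|g0 t| <= C0) ->
  (forall t, a < t < c -> g b t @[b --> 0^'+] --> g0 t) ->
  \int[mu]_(t in `[a, c]) (f t * g b t) @[b --> 0^'+]
    --> \int[mu]_(t in `[a, c]) (f t * g0 t).
Proof.
move=> hf mg mg0 gC g0C gcvg.
have hfo : mu.-integrable `]a, c[ (EFin \o f).
  by apply: integrableS hf => //; exact: subset_itv_oo_cc.
have mf : measurable_fun `[a, c] f.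
  by apply/measurable_realfun.measurable_EFinP; exact: measurable_int hf.
have mfg (h : R -> R) : measurable_fun setT h -> measurable_fun `[a, c] (fun t => f t * h t).
  by move=> mh; apply: measurable_realfun.measurable_funM => //; exact: measurable_funS mh.
have mfgo (h : R -> R) : measurable_fun setT h -> measurable_fun `]a, c[ (fun t => f t * h t).
  by move=> /mfg; apply: measurable_funS => //; exact: subset_itv_oo_cc.
have fg0_int : mu.-integrable `]a, c[ (fun t => (f t * g0 t)%:E).
  have : mu.-integrable `]a, c[ ((EFin \o f) \* (EFin \o g0))%E.
    apply: integrableMl => //; first exact: measurable_funS mg0.
    exists C0; split; first exact: num_real.
    by move=> r C0r t _; apply/ltW/le_lt_trans/C0r.
  by apply: eq_integrable => // t _; rewrite /= EFinM.
have dom_int : mu.-integrable `]a, c[ (fun t => (C * `|f t|)%:E).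
  have : mu.-integrable `]a, c[ (fun t => C%:E * (EFin \o (Num.norm \o f)) t)%E.
    by apply: integrableZl => //; exact: integrable_norm.
  by apply: eq_integrable => // t _; rewrite /= EFinM.
rewrite Rintegral_itv_cc_oo; last exact: mfg.
apply/cvg_at_rightP => u [u0 ucvg].
under eq_fun => n do [rewrite Rintegral_itv_cc_oo; last exact: mfg].
apply: fine_cvg; rewrite fineK; last exact: integrable_fin_num fg0_int.
apply: (dominated_cvg _ _ _ _ dom_int) => //.
- by move=> n; apply/measurable_realfun.measurable_EFinP; exact: mfgo.
- move=> t /=; rewrite in_itv /= => act.
  apply: cvg_EFin; first exact: nearW.
  apply: cvgM; first exact: cvg_cst.
  exact: (cvg_at_rightP _ _ _).1 (gcvg t act) u (conj u0 ucvg).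
- by move=> n t _; rewrite /= lee_fin normrM mulrC ler_wpM2r.
Qed.

End DominatedLimit.

Section PiecewiseLinear.
Variable R : realType.

Lemma measurable_lin (p q l r : R) : measurable_fun setT (lin p q l r).
Proof.
apply: measurable_realfun.measurable_funD; first exact: measurable_cst.
apply: measurable_realfun.measurable_funM; last exact: measurable_cst.
apply: measurable_realfun.measurable_funM; first exact: measurable_cst.
by apply: measurable_realfun.measurable_funB; [exact: measurable_id | exact: measurable_cst].
Qed.

Lemma measurable_pw_lin (p : nat -> R) M l r : measurable_fun setT (pw_lin p M l r).
Proof.
apply: measurable_sum => k; apply: measurable_fun_ifT; last exact: measurable_cst.
  apply: measurable_and; first exact: measurable_realfun.measurable_fun_ler.
  exact: measurable_realfun.measurable_fun_ltr.
exact: measurable_lin.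
Qed.

Lemma norm_lin_le (p q l r t : R) : p <= t < q -> `|lin p q l r t| <= `|l| + `|r|.
Proof.
move=> /andP[pt tq]; set s := (t - p) / (q - p).
have s0 : 0 <= s by apply: divr_ge0; lra.
have s1 : s <= 1 by rewrite /s ler_pdivrMr ?mul1r; lra.
have -> : lin p q l r t = (1 - s) * l + s * r by rewrite /lin -mulrA /s; ring.
clearbody s; apply: le_trans (ler_normD _ _) _.
rewrite !normrM (ger0_norm s0) (@ger0_norm _ (1 - s)) ?subr_ge0 //.
by have := normr_ge0 l; have := normr_ge0 r; nra.
Qed.

Lemma norm_pw_lin_le (p : nat -> R) M l r t :
  `|pw_lin p M l r t| <= \sum_(k < M) (`|l k| + `|r k|).
Proof.
apply: le_trans (ler_norm_sum _ _ _) _; apply: ler_sum => k _.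
by case: ifP => [/norm_lin_le //|_]; rewrite normr0 addr_ge0.
Qed.

Lemma lin_cvg (p q : R -> R) (p0 q0 l r t : R) : p0 != q0 ->
  p b @[b --> 0^'+] --> p0 -> q b @[b --> 0^'+] --> q0 ->
  lin (p b) (q b) l r t @[b --> 0^'+] --> lin p0 q0 l r t.
Proof.
move=> pq0 pcvg qcvg; apply: cvgD; first exact: cvg_cst.
apply: cvgM; first by apply: cvgM; [exact: cvg_cst | apply: cvgB; [exact: cvg_cst |]].
by apply: cvgV; [rewrite subr_eq0 eq_sym | exact: cvgB].
Qed.

End PiecewiseLinear.

Section EnrichedMesh.
Variable R : realType.
Variables (x : nat -> R) (N : nat).

Lemma zb_double b i : zb x b i.*2 = yb x b i.
Proof. by rewrite /zb odd_double half_double. Qed.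

Lemma zb_doubleS b i : zb x b i.*2.+1 = xb x b i.
Proof. by rewrite /zb /= odd_double /= uphalf_double. Qed.

Lemma zb_doubleSS b i : zb x b i.*2.+2 = yb x b i.+1.
Proof. by rewrite -doubleS zb_double. Qed.

(* [x_0] is moved to [x_0 + beta], so the first cell [I_0] loses [2 beta]. *)
Definition beta_small b := 0 < b /\ forall i, (i <= N)%N -> 2 * b < x i.+1 - x i.

Lemma incr_mesh_zb b : beta_small b -> incr_mesh (zb x b) N.*2.+3.
Proof.
move=> [b0 hb] k hk; have [i [ek|ek]] := nat_double_cases k; subst k.
  by rewrite zb_double zb_doubleS /yb; lra.
rewrite zb_doubleS zb_doubleSS /yb /xb /=.
have /hb : (i <= N)%N by lia.
by case: ifP => [/eqP ->|_]; lra.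
Qed.

Lemma coefD_cell (D : R) b k t : beta_small b -> (k < N.*2.+3)%N ->
  zb x b k <= t < zb x b k.+1 -> Defs.coefD x N D b t = if odd k then 1 else b * D.
Proof.
move=> hb hk ht; have hz := incr_mesh_zb hb.
have [i [ek|ek]] := nat_double_cases k; subst k.
  rewrite odd_double /Defs.coefD asboolT //.
  have iN : (i < N.+2)%N by lia.
  by exists (Ordinal iN); rewrite /= -zb_double -zb_doubleS.
rewrite /= odd_double /Defs.coefD asboolF // => -[j /andP[yjt txj]].
move: ht; rewrite zb_doubleS zb_doubleSS => /andP[xit tyi].
have jN := ltn_ord j.
have [ji|ij] := leqP j i.
  have : xb x b j <= xb x b i by rewrite -!zb_doubleS; apply: incr_mesh_le hz _ _; lia.
  lra.
have : yb x b i.+1 <= yb x b j by rewrite -!zb_double; apply: incr_mesh_le hz _ _; lia.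
lra.
Qed.

Lemma wval_doubleS (L Rt : nat -> R) i : (i <= N)%N -> wval N L Rt i.*2.+1 = L i.
Proof.
move=> iN; rewrite /wval.
have -> : (i.*2.+1 == 0)%N || (i.*2.+1 == N.*2.+3)%N = false by lia.
by rewrite /= odd_double /= uphalf_double.
Qed.

Lemma wval_doubleSS (L Rt : nat -> R) i : (i <= N)%N -> wval N L Rt i.*2.+2 = Rt i.
Proof.
move=> iN; rewrite /wval.
have -> : (i.*2.+2 == 0)%N || (i.*2.+2 == N.*2.+3)%N = false by lia.
by rewrite /= odd_double /= half_double.
Qed.

Lemma wval_jump (L Rt : nat -> R) i : (i <= N.+1)%N ->
  wval N L Rt i.*2.+1 - wval N L Rt i.*2 = jump N L Rt i.
Proof.
move=> iN; rewrite /jump; have [->|i0] := eqVneq i 0%N; first by rewrite /wval subr0.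
have [->|iN1] := eqVneq i N.+1.
  by rewrite doubleS wval_doubleSS // /wval eqxx orbT /= sub0r.
have iN0 : (i <= N)%N by lia.
have iN' : (i.-1 <= N)%N by lia.
have ei : i.*2 = i.-1.*2.+2 by lia.
by rewrite wval_doubleS // ei wval_doubleSS.
Qed.

Definition enriched_slope (L Rt : nat -> R) b k :=
  (wval N L Rt k.+1 - wval N L Rt k) / (zb x b k.+1 - zb x b k).

Lemma fe_deriv_cell L Rt b k t : beta_small b -> (k < N.*2.+3)%N ->
  zb x b k <= t < zb x b k.+1 -> fe_deriv x N b L Rt t = enriched_slope L Rt b k.
Proof. by move=> /incr_mesh_zb; exact: sum_on_cell. Qed.

Definition enriched_len b i := yb x b i.+1 - xb x b i.

Lemma fe_aE D b uL uR vL vR : beta_small b ->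
  fe_a x N D b uL uR vL vR =
  \sum_(i < N.+1) (uR i - uL i) / enriched_len b i * ((vR i - vL i) / enriched_len b i)
                  * enriched_len b i
  + D * \sum_(i < N.+2) (jump N uL uR i * jump N vL vR i).
Proof.
move=> hb; have hz := incr_mesh_zb hb.
have b0 : b != 0 by case: hb => b0 _; rewrite gt_eqF.
have e0 : x 0%N = zb x b 0 by rewrite /zb /yb /xb /=; lra.
have eN : x N.+1 = zb x b N.*2.+3 by rewrite -[N.*2.+3]/(N.+1).*2.+1 zb_doubleS.
pose c k := (if odd k then 1 else b * D) *
  enriched_slope uL uR b k * enriched_slope vL vR b k.
rewrite /fe_a e0 eN (Rintegral_cellwise_const (c := c) hz); last first.
  move=> k t hk ht.
  by rewrite (coefD_cell D hb hk ht) !(fe_deriv_cell _ _ hb hk ht).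
rewrite (sum_split_parity (fun k => c k * (zb x b k.+1 - zb x b k)) N.+1) addrC.
congr (_ + _).
  apply: eq_bigr => i _; have iN : (i <= N)%N by rewrite -ltnS.
  rewrite /c /enriched_slope /= odd_double /= zb_doubleSS zb_doubleS.
  by rewrite !wval_doubleS // !wval_doubleSS // mul1r.
rewrite mulr_sumr; apply: eq_bigr => i _; have iN : (i <= N.+1)%N by rewrite -ltnS.
rewrite /c /enriched_slope odd_double zb_doubleS zb_double !wval_jump // /yb subKr.
by field.
Qed.

Lemma fe_fun_cell L Rt b i t : beta_small b -> (i <= N)%N ->
  xb x b i <= t < yb x b i.+1 ->
  fe_fun x N b L Rt t = lin (xb x b i) (yb x b i.+1) (L i) (Rt i) t.
Proof.
move=> hb iN ht; have hk : (i.*2.+1 < N.*2.+3)%N by lia.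
pose F k := lin (zb x b k) (zb x b k.+1) (wval N L Rt k) (wval N L Rt k.+1) t.
rewrite /fe_fun /pw_lin (sum_on_cell F (incr_mesh_zb hb) hk).
  by rewrite /F zb_doubleS zb_doubleSS wval_doubleS // wval_doubleSS.
by rewrite zb_doubleS zb_doubleSS.
Qed.

Lemma xb_cvg i : xb x b i @[b --> 0^'+] --> x i.
Proof.
rewrite /xb; case: eqP => [->|_]; last exact: cvg_cst.
apply: cvg_at_right_filter; rewrite -[X in _ --> X]addr0.
by apply: cvgD; [exact: cvg_cst | exact: cvg_id].
Qed.

Lemma yb_cvg i : yb x b i.+1 @[b --> 0^'+] --> x i.+1.
Proof.
apply: cvg_at_right_filter; rewrite -[X in _ --> X]subr0.
by apply: cvgB; [exact: cvg_cst | exact: cvg_id].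
Qed.

Lemma enriched_len_cvg i : enriched_len b i @[b --> 0^'+] --> x i.+1 - x i.
Proof. by apply: cvgB; [exact: yb_cvg | exact: xb_cvg]. Qed.

End EnrichedMesh.

Section Limits.
Variable R : realType.
Variables (x : nat -> R) (N : nat).
Hypothesis hx : forall i, (i <= N)%N -> x i < x i.+1.

Definition slope (L Rt : nat -> R) i := (Rt i - L i) / (x i.+1 - x i).

Lemma incr_mesh_x : incr_mesh x N.+1.
Proof. by move=> k; rewrite ltnS; exact: hx. Qed.

Lemma dg_deriv_cell L Rt i t : (i <= N)%N -> x i <= t < x i.+1 ->
  dg_deriv x N L Rt t = slope L Rt i.
Proof. exact: (sum_on_cell (fun k => slope L Rt k) incr_mesh_x). Qed.

Lemma dg_fun_cell L Rt i t : (i <= N)%N -> x i <= t < x i.+1 ->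
  dg_fun x N L Rt t = lin (x i) (x i.+1) (L i) (Rt i) t.
Proof. exact: (sum_on_cell (fun k => lin (x k) (x k.+1) (L k) (Rt k) t) incr_mesh_x). Qed.

Lemma dg_aE D uL uR vL vR : dg_a x N D uL uR vL vR =
  \sum_(i < N.+1) slope uL uR i * slope vL vR i * (x i.+1 - x i)
  + D * \sum_(i < N.+2) (jump N uL uR i * jump N vL vR i).
Proof.
congr (_ + _); apply: eq_bigr => i _.
have iN : (i <= N)%N by rewrite -ltnS.
apply: Rintegral_itv_const; first exact: hx.
by move=> t ht; rewrite !(dg_deriv_cell _ _ iN ht).
Qed.

Lemma near_beta_small : \forall b \near 0^'+, beta_small x N b.
Proof.
have gaps : \forall b \near (0 : R)^'+, forall i : 'I_N.+1, 2 * b < x i.+1 - x i.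
  apply: filter_forall => i; have /hx xi : (i <= N)%N by rewrite -ltnS.
  near=> b; suff : b < (x i.+1 - x i) / 2 by lra.
  by near: b; apply: nbhs_right_lt; lra.
near=> b; split => [|i iN]; first by near: b; exact: nbhs_right_gt.
by have /(_ _ (Ordinal (iN : (i < N.+1)%N))) := near gaps b; apply.
Unshelve. all: by end_near.
Qed.

Lemma fe_a_cvg D uL uR vL vR :
  fe_a x N D b uL uR vL vR @[b --> 0^'+] --> dg_a x N D uL uR vL vR.
Proof.
have cell_cvg i : (i <= N)%N -> forall a a' : R,
    a / enriched_len x b i * (a' / enriched_len x b i) * enriched_len x b i
      @[b --> 0^'+] --> a / (x i.+1 - x i) * (a' / (x i.+1 - x i)) * (x i.+1 - x i).
  move=> iN a a'; have len_cvg := @enriched_len_cvg _ x i.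
  have len_neq0 : x i.+1 - x i != 0 by rewrite subr_eq0 gt_eqF ?hx.
  have div_cvg c : c / enriched_len x b i @[b --> 0^'+] --> c / (x i.+1 - x i).
    by apply: cvgM; [exact: cvg_cst | exact: cvgV].
  exact: cvgM (cvgM (div_cvg a) (div_cvg a')) len_cvg.
rewrite dg_aE; apply: cvg_trans (near_eq_cvg _) _.
  by near=> b; rewrite fe_aE //; near: b; exact: near_beta_small.
apply: cvgD; last exact: cvg_cst.
apply: cvg_big => [|i _]; first exact: pseudometric_normed_Zmodule.add_continuous.
by apply: cell_cvg; rewrite -ltnS.
Unshelve. all: by end_near.
Qed.

Lemma fe_fun_cvg L Rt t : x 0%N < t < x N.+1 ->
  fe_fun x N b L Rt t @[b --> 0^'+] --> dg_fun x N L Rt t.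
Proof.
move=> /andP[x0t txN].
have [i iN /andP[xit txi]] : exists2 i, (i < N.+1)%N & x i <= t < x i.+1.
  by apply: exists_cell incr_mesh_x _; rewrite (ltW x0t) txN.
have {}iN : (i <= N)%N by rewrite -ltnS.
rewrite (dg_fun_cell _ _ iN); last by rewrite xit txi.
have gap : x i != x i.+1 by rewrite lt_eqF ?hx.
apply: (cvg_trans _ (lin_cvg gap (@xb_cvg _ x i) (@yb_cvg _ x i))).
apply: near_eq_cvg; near=> b; rewrite (fe_fun_cell _ _ _ iN) //.
  by near: b; exact: near_beta_small.
have b1 : b < t - x 0%N by near: b; apply: nbhs_right_lt; lra.
have b2 : b < x i.+1 - t by near: b; apply: nbhs_right_lt; lra.
by rewrite /yb /xb /=; case: eqP => [i0|_]; [subst i|]; apply/andP; split; lra.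
Unshelve. all: by end_near.
Qed.

Lemma fe_l_cvg f vL vR : lebesgue_measure.-integrable `[x 0%N, x N.+1] (EFin \o f) ->
  fe_l x N f b vL vR @[b --> 0^'+] --> dg_l x N f vL vR.
Proof.
move=> hf; apply: (Rintegral_mul_bounded_cvg
  (C := \sum_(k < N.*2.+3) (`|wval N vL vR k| + `|wval N vL vR k.+1|))
  (C0 := \sum_(k < N.+1) (`|vL k| + `|vR k|)) hf).
- by move=> b; exact: measurable_pw_lin.
- exact: measurable_pw_lin.
- by move=> b t; exact: norm_pw_lin_le.
- by move=> t; exact: norm_pw_lin_le.
- by move=> t; exact: fe_fun_cvg.
Qed.

End Limits.

Unset Implicit Arguments.

Theorem theorem2p1 (R : realType) (N : nat) (x : nat -> R) (D : R) (f : R -> R)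
  (hx : forall i : nat, (i <= N)%N -> x i < x i.+1)
  (hD : 0 < D)
  (hf : lebesgue_measure.-integrable `[x 0%N, x N.+1] (EFin \o f)) :
  (forall uL uR vL vR : nat -> R,
      fe_a x N D beta uL uR vL vR @[beta --> 0^'+] --> dg_a x N D uL uR vL vR)
  /\ (forall vL vR : nat -> R,
      fe_l x N f beta vL vR @[beta --> 0^'+] --> dg_l x N f vL vR)
  /\ (forall uL uR : nat -> R,
      (forall vL vR : nat -> R,
          (fe_a x N D beta uL uR vL vR - fe_l x N f beta vL vR) @[beta --> 0^'+] --> 0)
      <-> dg_solution x N D f uL uR).
Proof.
have fe_a_lim uL uR vL vR := @fe_a_cvg R x N hx D uL uR vL vR.
have fe_l_lim vL vR := @fe_l_cvg R x N hx f vL vR hf.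
split=> //; split=> // uL uR.
have residual_cvg vL vR : fe_a x N D b uL uR vL vR - fe_l x N f b vL vR @[b --> 0^'+]
    --> dg_a x N D uL uR vL vR - dg_l x N f vL vR.
  exact: cvgB.
split=> [residual0 vL vR | sol vL vR].
  apply/eqP; rewrite -subr_eq0; apply/eqP.
  exact: (cvg_unique _ (residual_cvg vL vR) (residual0 vL vR)).
by have := residual_cvg vL vR; rewrite sol subrr.
Qed.
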